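(* Let $X$ be a Tychonoff space containing a countably infinite subset $N$ such that (1) $N$ is not nowhere dense in $X$; (2) $X\setminus N$ is dense in $X$; (3) each singleton subset of $N$ is a zero set in $X$. Then $T''(X)$ is not closed under uniform limits (there is a sequence in $T''(X)$ converging uniformly on $X$ to a function not in $T''(X)$), and hence $T''(X)$ is not ring-isomorphic to $C(Y)$ for any topological space $Y$.
   Context: $C(X)$ is the ring of real-valued continuous functions on $X$. A zero set is a set $Z(g)=\{x: g(x)=0\}$ with $g\in C(X)$, and a cozero set is its complement $coz(g)$. $T''(X)$ is the ring (under pointwise operations) of all functions $f\colon X\to\mathbb{R}$ for which there is a dense cozero set $U$ of $X$ with $f|_U$ continuous. *)

From HB Require Import structures.
From mathcomp Require Import all_boot all_order all_algebra.
From mathcomp Require Import all_classical all_reals all_analysis.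
Set Implicit Arguments. Unset Strict Implicit. Unset Printing Implicit Defensive.
Import Order.TTheory GRing.Theory Num.Theory numFieldNormedType.Exports.
Local Open Scope classical_set_scope.
Local Open Scope ring_scope.

Definition tychonoff_space (R : realType) (X : topologicalType) : Prop :=
  accessible_space X /\
  forall (x : X) (B : set X), closed B -> ~ B x ->
    exists f : X -> R, continuous f /\ f x = 0 /\ (forall y, B y -> f y = 1).

Definition zero_set (R : realType) (X : topologicalType) (g : X -> R) : set X :=
  [set x | g x = 0].

Definition is_zero_set (R : realType) (X : topologicalType) (A : set X) : Prop :=
  exists g : X -> R, continuous g /\ A = zero_set g.

Definition is_cozero_set (R : realType) (X : topologicalType) (U : set X) : Prop :=
  exists g : X -> R, continuous g /\ U = [set x | g x != 0].

Definition nowhere_dense (X : topologicalType) (A : set X) : Prop :=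
  interior (closure A) = set0.

Definition Cfun (R : realType) (X : topologicalType) (f : X -> R) : Prop :=
  continuous f.

Definition T2fun (R : realType) (X : topologicalType) (f : X -> R) : Prop :=
  exists U : set X, is_cozero_set R U /\ dense U /\ {within U, continuous f}.

Definition ring_iso_between (R : realType) (X Y : Type)
    (P : (X -> R) -> Prop) (Q : (Y -> R) -> Prop) : Prop :=
  exists phi : (X -> R) -> (Y -> R),
    [/\ (forall f, P f -> Q (phi f)),
        (forall f g, P f -> P g -> phi f = phi g -> f = g),
        (forall h, Q h -> exists2 f, P f & phi f = h),
        (forall f g, P f -> P g -> phi (fun x => f x + g x) = (fun y => phi f y + phi g y)) &
        (forall f g, P f -> P g -> phi (fun x => f x * g x) = (fun y => phi f y * phi g y))].

From HB Require Import structures.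
From mathcomp Require Import all_boot all_order all_algebra.
From mathcomp Require Import all_classical all_reals all_analysis.
From mathcomp Require Import lra.
Import Order.TTheory GRing.Theory Num.Theory numFieldNormedType.Exports.
Local Open Scope classical_set_scope.
Local Open Scope ring_scope.

(* Enumerate N injectively by idx and let g be 1/(idx x + 1) on N and 0 off N,
   and f_n the restriction of g to the first n points of N. Each f_n vanishes
   off a finite union of zero sets, so it is continuous on a dense cozero set,
   and f_n converges uniformly to g. But g vanishes on the dense set X \ N
   without vanishing on N, so it is discontinuous at every point of N, while
   every dense cozero set meets the somewhere dense set N: g is not in T''(X).
   A ring isomorphism between function rings closed under square roots
   preserves nonnegativity (nonnegative functions are the squares) and fixes
   the constants 1/(k+1), hence preserves the bounds |u - v| <= 1/(k+1). It
   therefore carries uniform convergence back and forth, and since C(Y) is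
   complete and closed under uniform limits, so would be T''(X). *)

Section CozeroSets.
Context {R : realType} {X : topologicalType}.

Lemma is_zero_set0 : is_zero_set R (@set0 X).
Proof.
exists (cst 1); split; first exact: cst_continuous.
by apply/seteqP; split=> x //=; rewrite /zero_set/= => /eqP; rewrite oner_eq0.
Qed.

Lemma is_zero_setU (A B : set X) :
  is_zero_set R A -> is_zero_set R B -> is_zero_set R (A `|` B).
Proof.
move=> [a [ca ->]] [b [cb ->]]; exists (a \* b); split.
  by move=> x; exact: continuousM (ca x) (cb x).
apply/seteqP; split=> x; rewrite /zero_set/=.
  by case=> ->; rewrite (mul0r, mulr0).
by move=> /eqP; rewrite mulf_eq0 => /orP[]/eqP; [left|right].
Qed.

Lemma is_cozero_setC (A : set X) : is_zero_set R A -> is_cozero_set R (~` A).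
Proof.
move=> [a [ca ->]]; exists a; split=> //.
by apply/seteqP; split=> x /=; rewrite /zero_set/= => /eqP.
Qed.

Lemma is_cozero_setI (U V : set X) :
  is_cozero_set R U -> is_cozero_set R V -> is_cozero_set R (U `&` V).
Proof.
move=> [a [ca ->]] [b [cb ->]]; exists (a \* b); split.
  by move=> x; exact: continuousM (ca x) (cb x).
by apply/seteqP; split=> x /=; rewrite mulf_eq0 negb_or => /andP.
Qed.

Lemma open_cozero_set {U : set X} : is_cozero_set R U -> open U.
Proof.
move=> [a [ca ->]]; rewrite -[X in open X]/(a @^-1` [set r | r != 0]).
by apply: (continuousP a).1 => //; exact: open_neq.
Qed.

End CozeroSets.

Section T2fun.
Context {R : realType} {X : topologicalType}.
Implicit Types f g : X -> R.

Lemma T2funP f : T2fun f <-> exists U,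
  [/\ is_cozero_set R U, dense U & forall x, U x -> {for x, continuous f}].
Proof.
split=> -[U] => [[cU [dU cf]]|[cU dU cf]]; exists U;
  have oU := open_cozero_set cU.
  split=> //; rewrite continuous_open_subspace // in cf.
  by move=> x Ux; apply: cf; rewrite inE.
do 2 split=> //; rewrite continuous_open_subspace //.
by move=> x; rewrite inE; exact: cf.
Qed.

Lemma T2fun_cst (c : R) : T2fun (cst c : X -> R).
Proof.
apply/T2funP; exists setT; split.
- by rewrite -setC0; apply: is_cozero_setC; exact: is_zero_set0.
- by move=> O [x Ox] _; exists x.
- by move=> x _; exact: cst_continuous.
Qed.

Lemma T2fun_binop (op : R -> R -> R) f g :
  (forall x, {for x, continuous f} -> {for x, continuous g} ->
    {for x, continuous (fun y => op (f y) (g y))}) ->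
  T2fun f -> T2fun g -> T2fun (fun x => op (f x) (g x)).
Proof.
move=> cop /T2funP[U [cU dU cf]] /T2funP[V [cV dV cg]].
apply/T2funP; exists (U `&` V); split.
- exact: is_cozero_setI.
- by apply: denseI => //; exact: open_cozero_set cU.
- by move=> x [Ux Vx]; exact: cop (cf x Ux) (cg x Vx).
Qed.

Lemma T2funB f g : T2fun f -> T2fun g -> T2fun (fun x => f x - g x).
Proof. by apply: (T2fun_binop (fun a b => a - b)) => x; exact: continuousB. Qed.

Lemma T2funM f g : T2fun f -> T2fun g -> T2fun (fun x => f x * g x).
Proof. by apply: (T2fun_binop (fun a b => a * b)) => x; exact: continuousM. Qed.

Lemma T2fun_comp (k : R -> R) f : continuous k -> T2fun f -> T2fun (k \o f).
Proof.
move=> ck /T2funP[U [cU dU cf]]; apply/T2funP; exists U; split=> // x Ux.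
exact: continuous_comp (cf x Ux) (ck (f x)).
Qed.

End T2fun.

Section UniformConvergence.
Context {R : realType} {T : choiceType}.
Implicit Types (u : nat -> T -> R) (h : T -> R).

Definition uniform_cvg u h := forall e : R, 0 < e ->
  exists m : nat, forall n, (m <= n)%N -> forall x, `|u n x - h x| < e.

(* Tolerances 1/(k+1): these are the constants a ring isomorphism fixes. *)
Definition uniform_cauchy u := forall k : nat,
  exists m : nat, forall n n', (m <= n)%N -> (m <= n')%N ->
    forall x, `|u n x - u n' x| <= k.+1%:R^-1.

Lemma invSn_gt0 (k : nat) : 0 < k.+1%:R^-1 :> R.
Proof. by rewrite invr_gt0. Qed.

Lemma uniform_cvgE u h : uniform_cvg u h <->
  (u : nat -> arrow_uniform_type T R^o) @ \oo -->
  (h : arrow_uniform_type T R^o).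
Proof.
rewrite cvg_ballP; split=> [uh e /uh[m um]|uh e /uh[m _ um]].
  by exists m => // n /um uhn x; rewrite /ball/= distrC.
by exists m => n /um uhn x; rewrite distrC; exact: uhn.
Qed.

Lemma uniform_cvg_invSnP {u h} : uniform_cvg u h <->
  forall k : nat, exists m : nat, forall n, (m <= n)%N ->
    forall x, `|u n x - h x| <= k.+1%:R^-1.
Proof.
split=> [uh k|uh e e0].
  have [m um] := uh _ (invSn_gt0 k).
  by exists m => n /um unx x; exact: ltW (unx x).
have [k _ /(_ k (leqnn k)) /= ke] := near_infty_natSinv_lt (PosNum e0).
have [m um] := uh k.
by exists m => n /um unx x; exact: le_lt_trans (unx x) ke.
Qed.

Lemma uniform_cvg_cauchy {u h} : uniform_cvg u h -> uniform_cauchy u.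
Proof.
move=> uh k; have [m um] := uh _ (divr_gt0 (invSn_gt0 k) (ltr0Sn R 1)).
exists m => n n' /um unx /um un'x x.
have := ler_distD (h x) (u n x) (u n' x).
move: (unx x) (un'x x); rewrite [`|h x - _|]distrC; set w := k.+1%:R^-1; lra.
Qed.

Lemma uniform_cauchy_cvg {u} : uniform_cauchy u -> exists h, uniform_cvg u h.
Proof.
move=> uc; have : cvg ((u : nat -> arrow_uniform_type T R^o) @ \oo).
  apply/cauchy_cvgP/cauchy_exP => e e0.
  have [k _ /(_ k (leqnn k)) /= ke] := near_infty_natSinv_lt (PosNum e0).
  have [m um] := uc k; exists (u m), m => // n mn x.
  exact: le_lt_trans (um _ _ (leqnn m) mn x) ke.
by move=> /cvg_ex[h uh]; exists h; exact/uniform_cvgE.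
Qed.

Lemma uniform_cvg_pointwise {u h} :
  uniform_cvg u h -> forall x, u ^~ x @ \oo --> h x.
Proof.
move=> uh x; apply/cvgrPdist_lt => e /uh[m um].
by exists m => // n /um /(_ x); rewrite distrC.
Qed.

Lemma uniform_cvg_unique {u h h'} :
  uniform_cvg u h -> uniform_cvg u h' -> h = h'.
Proof.
move=> uh uh'; apply/funext => x.
exact: cvg_unique (uniform_cvg_pointwise uh x) (uniform_cvg_pointwise uh' x).
Qed.

Definition uniformly_closed (P : (T -> R) -> Prop) :=
  forall u h, (forall n, P (u n)) -> uniform_cvg u h -> P h.

End UniformConvergence.

Lemma uniformly_closed_Cfun {R : realType} {X : topologicalType} :
  uniformly_closed (@Cfun R X).
Proof.
move=> u h cu /uniform_cvgE uh.
apply: (uniform_limit_continuous (F := u @ \oo)).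
  by exists 0%N => // n _; exact: cu.
by move=> A; rewrite /= uniform_nbhsT; exact: uh.
Qed.

Lemma ler_norm_sqr (R : realDomainType) (a r : R) :
  0 <= r -> (`|a| <= r) = (a * a <= r * r).
Proof.
by move=> r0; rewrite -!expr2 -real_normK ?num_real // ler_sqr ?nnegrE.
Qed.

Section RingIsomorphism.
Context {R : realType} {X Y : choiceType}.
Variables (P : (X -> R) -> Prop) (Q : (Y -> R) -> Prop).
Variable phi : (X -> R) -> Y -> R.
Hypothesis P_cst : forall c, P (cst c).
Hypothesis P_sub : forall {f g}, P f -> P g -> P (fun x => f x - g x).
Hypothesis P_mul : forall {f g}, P f -> P g -> P (fun x => f x * g x).
Hypothesis P_sqrt : forall {f}, P f -> P (fun x => Num.sqrt (f x)).
Hypothesis Q_cst1 : Q (cst 1).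
Hypothesis Q_sqrt : forall {h}, Q h -> Q (fun y => Num.sqrt (h y)).
Hypothesis phiP : forall {f}, P f -> Q (phi f).
Hypothesis phi_inj : forall {f g}, P f -> P g -> phi f = phi g -> f = g.
Hypothesis phi_surj : forall {h}, Q h -> exists2 f, P f & phi f = h.
Hypothesis phiD : forall {f g}, P f -> P g ->
  phi (fun x => f x + g x) = (fun y => phi f y + phi g y).
Hypothesis phiM : forall {f g}, P f -> P g ->
  phi (fun x => f x * g x) = (fun y => phi f y * phi g y).

Lemma phiB {f g} : P f -> P g ->
  phi (fun x => f x - g x) = (fun y => phi f y - phi g y).
Proof.
move=> Pf Pg; have fE : f = (fun x => (f x - g x) + g x).
  by apply/funext => x; rewrite subrK.
have := phiD (P_sub Pf Pg) Pg; rewrite /= -fE => E.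
by apply/funext => y; rewrite E addrK.
Qed.

Lemma phi_cst1 : phi (cst 1) = cst 1.
Proof.
have [e Pe phie] := phi_surj Q_cst1.
have := phiM (P_cst 1) Pe.
rewrite (_ : (fun x => _) = e); last by apply/funext => x; rewrite mul1r.
rewrite phie => E; apply/funext => y.
by have := congr1 (@^~ y) E; rewrite /= mulr1.
Qed.

Lemma phi_cst_nat n : phi (cst n%:R) = cst n%:R.
Proof.
elim: n => [|n IH].
  have := phiB (P_cst 1) (P_cst 1); rewrite phi_cst1.
  rewrite (_ : (fun x => _) = cst 0); last by apply/funext => x; rewrite subrr.
  by move=> ->; apply/funext => y; rewrite subrr.
have := phiD (P_cst 1) (P_cst n%:R); rewrite phi_cst1 IH.
rewrite (_ : (fun x => _) = cst n.+1%:R) => [->|];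
  by apply/funext => x; rewrite mulrS.
Qed.

Lemma phi_cst_invSn k : phi (cst k.+1%:R^-1) = cst k.+1%:R^-1.
Proof.
have k0 : k.+1%:R != 0 :> R by rewrite pnatr_eq0.
have := phiM (P_cst k.+1%:R) (P_cst k.+1%:R^-1); rewrite phi_cst_nat.
rewrite (_ : (fun x => _) = cst 1); last by apply/funext => x; rewrite mulfV.
rewrite phi_cst1 => E; apply/funext => y; have := congr1 (@^~ y) E => /= E'.
by rewrite -[LHS](mulKf k0) -E' mulr1.
Qed.

Lemma phi_ge0 {f} : P f -> (forall x, 0 <= f x) <-> (forall y, 0 <= phi f y).
Proof.
move=> Pf; split=> [f0 y|phif0 x].
  have -> : f = (fun x => Num.sqrt (f x) * Num.sqrt (f x)).
    by apply/funext => x; rewrite -expr2 sqr_sqrtr.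
  by rewrite (phiM (P_sqrt Pf) (P_sqrt Pf)) -expr2 sqr_ge0.
have [s Ps phis] := phi_surj (Q_sqrt (phiP Pf)).
have -> : f = (fun x => s x * s x).
  apply: phi_inj => //; first exact: P_mul.
  by rewrite phiM // phis; apply/funext => y; rewrite -expr2 sqr_sqrtr.
by rewrite -expr2 sqr_ge0.
Qed.

Lemma phi_dist_le {r f g} : 0 <= r -> phi (cst r) = cst r -> P f -> P g ->
  (forall x, `|f x - g x| <= r) <-> (forall y, `|phi f y - phi g y| <= r).
Proof.
move=> r0 phir Pf Pg.
pose d x := r * r - (f x - g x) * (f x - g x).
have Pfg : P (fun x => f x - g x) := P_sub Pf Pg.
have Prr : P (fun x => cst r x * cst r x) := P_mul (P_cst r) (P_cst r).
have Pd : P d := P_sub Prr (P_mul Pfg Pfg).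
have phid : phi d = fun y => r * r - (phi f y - phi g y) * (phi f y - phi g y).
  rewrite (phiB Prr (P_mul Pfg Pfg)) (phiM (P_cst r) (P_cst r)) (phiM Pfg Pfg).
  by rewrite (phiB Pf Pg) phir.
have normE a : (`|a| <= r) = (0 <= r * r - a * a).
  by rewrite subr_ge0 ler_norm_sqr.
under eq_forall do rewrite normE.
under [X in _ <-> X]eq_forall do rewrite normE.
by have := phi_ge0 Pd; rewrite phid.
Qed.

Lemma uniformly_closed_transfer : uniformly_closed Q -> uniformly_closed P.
Proof.
move=> Qclosed f g Pf fg.
have invSn_ge0 k : 0 <= k.+1%:R^-1 :> R by exact/ltW/invSn_gt0.
have phif_cauchy : uniform_cauchy (fun n => phi (f n)).
  move=> k; have [m fm] := uniform_cvg_cauchy fg k.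
  exists m => n n' mn mn'.
  have := fm n n' mn mn'.
  exact: (phi_dist_le (invSn_ge0 k) (phi_cst_invSn k) (Pf n) (Pf n')).1.
have [h phif_h] := uniform_cauchy_cvg phif_cauchy.
have [f0 Pf0 phif0] := phi_surj (Qclosed _ _ (fun n => phiP (Pf n)) phif_h).
suff -> : g = f0 by [].
apply: uniform_cvg_unique fg _; apply/uniform_cvg_invSnP => k.
have [m hm] := uniform_cvg_invSnP.1 phif_h k.
exists m => n /hm phifn_h.
apply/(phi_dist_le (invSn_ge0 k) (phi_cst_invSn k) (Pf n) Pf0).
by rewrite phif0.
Qed.

End RingIsomorphism.

Section SomewhereDense.
Context {R : realType} {X : topologicalType}.

Lemma open_dense_meets {U A : set X} :
  open U -> dense U -> ~ nowhere_dense A -> U `&` A !=set0.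
Proof.
move=> oU dU ndA; have [y Iy] : (closure A)° !=set0.
  by apply/set0P/eqP => IA; apply: ndA.
have [z [Iz Uz]] := dU _ (ex_intro _ y Iy) (open_interior _).
have [p [Ap Up]] := interior_subset Iz U (open_nbhs_nbhs (conj oU Uz)).
by exists p.
Qed.

Lemma T2fun_continuous_somewhere (A : set X) (f : X -> R) :
  T2fun f -> ~ nowhere_dense A -> exists2 p, A p & {for p, continuous f}.
Proof.
move=> /T2funP[U [cU dU cf]] ndA.
have [p [Up Ap]] := open_dense_meets (open_cozero_set cU) dU ndA.
by exists p => //; exact: cf.
Qed.

Lemma continuous_at_vanishing_dense {D : set X} {f : X -> R} {p : X} :
  dense D -> (forall x, D x -> f x = 0) -> {for p, continuous f} -> f p = 0.
Proof.
move=> dD fD /cvgrPdist_lt cf; apply/eqP/contraT => fp0.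
have /cf near_fp : 0 < `|f p| by rewrite normr_gt0.
have [z [Iz Dz]] := dD _ (ex_intro _ p near_fp) (open_interior _).
by have := interior_subset Iz; rewrite /= (fD z Dz) subr0 ltxx.
Qed.

End SomewhereDense.

Section Counterexample.
Context {R : realType} {X : topologicalType}.
Variables (N : set X) (idx : X -> nat).
Hypothesis idx_inj : {in N &, injective idx}.
Hypothesis N_zero_set1 : forall p, N p -> is_zero_set R [set p].
Hypothesis N_not_nowhere_dense : ~ nowhere_dense N.
Hypothesis N_codense : dense (~` N).

Definition Nlt n := [set x | N x /\ (idx x < n)%N].

Let weight x : R := (idx x).+1%:R^-1.

Definition Nweight_lt n x := if `[< Nlt n x >] then weight x else 0.

Definition Nweight x := if `[< N x >] then weight x else 0.

Lemma is_zero_set_Nlt n : is_zero_set R (Nlt n).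
Proof.
elim: n => [|n IH].
  rewrite (_ : Nlt 0 = set0); first exact: is_zero_set0.
  by apply/seteqP; split=> x // [].
have -> : Nlt n.+1 = Nlt n `|` [set x | N x /\ idx x = n].
  apply/seteqP; split=> x /=.
    by case=> Nx; rewrite ltnS leq_eqVlt => /orP[/eqP|]; [right|left].
  by case=> -[Nx idxn]; split=> //; [exact: ltnW | rewrite idxn].
apply: is_zero_setU IH _.
have [[p [Np <-]]|none] := pselect (exists p, N p /\ idx p = n).
  rewrite (_ : [set x | _] = [set p]); first exact: N_zero_set1.
  apply/seteqP; split=> x /=; last by move=> ->.
  by case=> Nx /idx_inj; apply; rewrite inE.
rewrite (_ : [set x | _] = set0); first exact: is_zero_set0.
by apply/seteqP; split=> x // [Nx idxn]; apply: none; exists x.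
Qed.

Lemma T2fun_Nweight_lt n : T2fun (Nweight_lt n).
Proof.
exists (~` Nlt n); split; first exact/is_cozero_setC/is_zero_set_Nlt.
split.
  move=> O O0 oO; have [z [Oz Nz]] := N_codense O O0 oO.
  by exists z; split=> // -[].
apply: (@subspace_eq_continuous _ _ _ (cst 0)); last exact: cst_continuous.
by move=> x; rewrite inE => Fx; rewrite /from_subspace /Nweight_lt asboolF.
Qed.

Lemma Nweight_lt_uniform_cvg : uniform_cvg Nweight_lt Nweight.
Proof.
apply/uniform_cvg_invSnP => k; exists k => n kn x; rewrite /Nweight_lt /Nweight.
have [Nx|Nx] := pselect (N x); last first.
  by rewrite !asboolF ?subrr ?normr0 // => -[].
rewrite (asboolT Nx).
have [Fx|Fx] := pselect (Nlt n x); first by rewrite asboolT // subrr normr0.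
rewrite asboolF // sub0r normrN ger0_norm ?invr_ge0 //.
rewrite lef_pV2 ?posrE // ler_nat ltnS.
by apply: leq_trans kn _; rewrite leqNgt; apply/negP => ltn; exact: Fx.
Qed.

Lemma Nweight_not_T2fun : ~ T2fun Nweight.
Proof.
move=> /T2fun_continuous_somewhere /(_ N_not_nowhere_dense)[p Np cp].
have Nweight0 x : (~` N) x -> Nweight x = 0.
  by move=> Nx; rewrite /Nweight asboolF.
have /eqP := continuous_at_vanishing_dense N_codense Nweight0 cp.
by rewrite /Nweight /weight asboolT // invr_eq0 pnatr_eq0.
Qed.

End Counterexample.

Lemma T2fun_uniformly_closed_of_iso {R : realType} {X Y : topologicalType} :
  ring_iso_between (@T2fun R X) (@Cfun R Y) -> uniformly_closed (@T2fun R X).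
Proof.
move=> [phi [phiP phi_inj phi_surj phiD phiM]].
apply: (uniformly_closed_transfer (@T2fun R X) (@Cfun R Y) phi) => //.
- exact: T2fun_cst.
- by move=> f g; exact: T2funB.
- by move=> f g; exact: T2funM.
- by move=> f; exact: T2fun_comp (@sqrt_continuous R).
- by move=> y; exact: cst_continuous.
- by move=> h ch y; exact: continuous_comp (ch y) (@sqrt_continuous R _).
- exact: uniformly_closed_Cfun.
Qed.

Theorem theorem2p4 (R : realType) (X : topologicalType) (N : set X) :
  tychonoff_space R X ->
  countable N -> infinite_set N ->
  ~ nowhere_dense N ->
  dense (~` N) ->
  (forall p, N p -> is_zero_set R [set p]) ->
  (exists (f : nat -> X -> R) (g : X -> R),
      (forall n, T2fun (f n)) /\
      (forall e : R, 0 < e -> exists m : nat, forall n, (m <= n)%N ->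
          forall x, `|f n x - g x| < e) /\
      ~ T2fun g) /\
  (forall Y : topologicalType, ~ ring_iso_between (@T2fun R X) (@Cfun R Y)).
Proof.
move=> _ /countable_injP[idx idx_inj] _ ndN dCN N_zero_set1.
pose f : nat -> X -> R := Nweight_lt N idx.
pose g : X -> R := Nweight N idx.
have fT2 n : T2fun (f n) := T2fun_Nweight_lt N idx idx_inj N_zero_set1 dCN n.
have fg : uniform_cvg f g := Nweight_lt_uniform_cvg N idx.
have gNT2 : ~ T2fun g := Nweight_not_T2fun N idx ndN dCN.
split; first by exists f, g.
by move=> Y /T2fun_uniformly_closed_of_iso closedT2; exact/gNT2/(closedT2 f).
Qed.
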